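(* A large scale group $G$ has bounded geometry if and only if there is a bounded set $K\subseteq G$ such that every bounded subset $B$ of $G$ is contained in $\bigcup_{i=1}^k g_i\cdot K$ for some finitely many elements $g_1,\dots,g_k\in G$.
   Context: A large scale group is a group $G$ with a bornology $\mathcal B$ (a cover of $G$ closed under subsets and finite unions) closed under inverses and products; uniformly bounded covers are those refining $\{gB\}_{g\in G}$ for some $B\in\mathcal B$, bounded sets are members of $\mathcal B$. A large scale space $X$ has bounded geometry if it is coarsely equivalent to a large scale space $Y$ such that for every uniformly bounded cover $\mathcal U$ of $Y$ there is $N(\mathcal U)\in\mathbb N$ with every element of $\mathcal U$ having at most $N(\mathcal U)$ elements. Coarse equivalence: a coarse (preimages of bounded sets bounded) and large scale continuous (images of uniformly bounded covers refine uniformly bounded covers) map having a coarse large scale continuous map in the opposite direction such that both compositions are close to identities (close: $f(x)\in st(f'(x),\mathcal U)$ for all $x$ for some uniformly bounded $\mathcal U$, where $st(y,\mathcal U)$ is the union of members of $\mathcal U$ containing $y$). *)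

From HB Require Import structures.
From mathcomp Require Import all_boot.
From Stdlib Require Import List.

Set Implicit Arguments.
Unset Strict Implicit.
Unset Printing Implicit Defensive.

Definition subs (X : Type) := X -> Prop.
Definition fam (X : Type) := subs X -> Prop.

Definition subset_of {X : Type} (A B : subs X) := forall x, A x -> B x.

Definition is_cover {X : Type} (U : fam X) := forall x : X, exists2 W, U W & W x.

Definition refines {X : Type} (V U : fam X) :=
  forall W, V W -> exists2 W', U W' & subset_of W W'.

Definition st_set {X : Type} (A : subs X) (V : fam X) : subs X :=
  fun x => exists2 W, V W & (W x /\ exists y, W y /\ A y).

Definition st_pt {X : Type} (y : X) (V : fam X) : subs X :=
  fun x => exists2 W, V W & (W x /\ W y).

Definition st_fam {X : Type} (U V : fam X) : fam X :=
  fun S => exists2 A, U A & S = st_set A V.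

(* A large scale structure on X (Dydak--Hoffland, phrased with covers):
   a nonempty family of covers ("uniformly bounded covers") closed under
   coarsening-refinement (every element with >= 2 points lies in an element
   of a uniformly bounded cover) and under stars. *)
Definition is_lss {X : Type} (ub : fam X -> Prop) : Prop :=
  [/\ exists U, ub U,
      (forall U, ub U -> is_cover U),
      (forall U V, ub U -> is_cover V ->
         (forall W, V W -> (exists x y, x <> y /\ W x /\ W y) ->
            exists2 W', U W' & subset_of W W') -> ub V)
    & (forall U V, ub U -> ub V -> ub (st_fam U V))].

Definition ls_bounded {X : Type} (ub : fam X -> Prop) (B : subs X) :=
  exists U, ub U /\ exists2 W, U W & subset_of B W.

Definition preimage {X Y : Type} (f : X -> Y) (B : subs Y) : subs X :=
  fun x => B (f x).

Definition image {X Y : Type} (f : X -> Y) (A : subs X) : subs Y :=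
  fun y => exists2 x, A x & y = f x.

Definition image_fam {X Y : Type} (f : X -> Y) (U : fam X) : fam Y :=
  fun S => exists2 A, U A & S = image f A.

Definition coarse {X Y : Type} (ubX : fam X -> Prop) (ubY : fam Y -> Prop)
  (f : X -> Y) :=
  forall B, ls_bounded ubY B -> ls_bounded ubX (preimage f B).

Definition ls_continuous {X Y : Type} (ubX : fam X -> Prop)
  (ubY : fam Y -> Prop) (f : X -> Y) :=
  forall U, ubX U -> exists2 V, ubY V & refines (image_fam f U) V.

Definition close {X Y : Type} (ubY : fam Y -> Prop) (f f' : X -> Y) :=
  exists2 U, ubY U & forall x, st_pt (f' x) U (f x).

Definition coarse_equivalent {X Y : Type} (ubX : fam X -> Prop)
  (ubY : fam Y -> Prop) :=
  exists (f : X -> Y) (g : Y -> X),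
    [/\ coarse ubX ubY f /\ ls_continuous ubX ubY f,
        coarse ubY ubX g /\ ls_continuous ubY ubX g,
        close ubX (fun x => g (f x)) (fun x => x)
      & close ubY (fun y => f (g y)) (fun y => y)].

Definition at_most {X : Type} (N : nat) (W : subs X) :=
  exists l : list X, length l <= N /\ forall x, W x -> In x l.

Definition has_bounded_geometry {X : Type} (ubX : fam X -> Prop) : Prop :=
  exists (Y : Type) (ubY : fam Y -> Prop),
    [/\ is_lss ubY, coarse_equivalent ubX ubY
      & forall U, ubY U -> exists N : nat, forall W, U W -> at_most N W].

Local Open Scope group_scope.

Definition set_mul {G : groupType} (A B : subs G) : subs G :=
  fun z => exists a b, A a /\ B b /\ z = a * b.

Definition set_inv {G : groupType} (A : subs G) : subs G :=
  fun z => A z^-1.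

Definition lcoset {G : groupType} (g : G) (A : subs G) : subs G :=
  fun z => exists2 a, A a & z = g * a.

Definition is_group_bornology {G : groupType} (Bor : fam G) : Prop :=
  [/\ is_cover Bor,
      (forall A B, Bor B -> subset_of A B -> Bor A),
      (forall A B, Bor A -> Bor B -> Bor (fun x => A x \/ B x)),
      (forall A, Bor A -> Bor (set_inv A))
    & (forall A B, Bor A -> Bor B -> Bor (set_mul A B))].

Definition group_ub {G : groupType} (Bor : fam G) : fam G -> Prop :=
  fun U => is_cover U /\
    exists2 B, Bor B & refines U (fun S => exists g, S = lcoset g B).

From Pilot Require Import Defs.
From HB Require Import structures.
From mathcomp Require Import all_boot.
From Stdlib Require Import List Classical ClassicalEpsilon ProofIrrelevance.
From mathcomp Require classical_sets.

Set Implicit Arguments.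
Unset Strict Implicit.
Unset Printing Implicit Defensive.

Local Open Scope group_scope.

(* (=>) If f : G -> Y is a coarse equivalence onto a space of bounded
   geometry with coarse inverse g, and g o f moves points inside translates
   hC, then K := C^-1 C works: a bounded B lies in the K-translates of the
   finitely many points g(y), y in f(B).
   (<=) Zorn's lemma gives a maximal K-separated subset A (no translate gK
   contains two of its points), which is therefore a K-net.  Equip A with
   the subspace structure, whose uniformly bounded covers are those with
   members in translates of one bounded set.  This is a large scale
   structure; a nearest-point retraction G -> A together with the inclusion
   is a coarse equivalence; and a trace of hC on A has at most as many
   points as translates of K needed to cover C, by separation. *)

Lemma at_most_cells (X I : Type) (P : I -> subs X) (idx : list I) (W : subs X) :
  (forall i x y, W x -> W y -> P i x -> P i y -> x = y) ->
  subset_of W (fun x => exists2 i, In i idx & P i x) ->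
  at_most (length idx) W.
Proof.
elim: idx W => [|i idx IH] W cell cover.
  by exists nil; split=> // x /cover [].
pose W' := fun x => W x /\ ~ P i x.
have [l [len_l W'l]] : at_most (length idx) W'.
  apply: IH => [j x y [Wx _] [Wy _]|x [Wx nPx]]; first exact: cell.
  by have [j [<-|idx_j] Pjx] := cover x Wx; [|exists j].
case: (classic (exists y, W y /\ P i y)) => [[y [Wy Piy]]|no_cell_pt].
  exists (y :: l); split=> // x Wx.
  by case: (classic (P i x)) => Pix; [left; apply: (cell i) | right; apply: W'l].
exists l; split; first exact: leqW.
move=> x Wx; apply: W'l; split=> // Pix.
by apply: no_cell_pt; exists x.
Qed.

Lemma lcoset_diff (G : groupType) (C : subs G) (h a b : G) :
  lcoset h C a -> lcoset h C b -> lcoset a (set_mul (set_inv C) C) b.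
Proof.
move=> [c Cc ->] [d Cd ->]; exists (c^-1 * d); last by rewrite mulgA mulgK.
by exists c^-1, d; rewrite /set_inv invgK.
Qed.

Lemma lcoset_trans (G : groupType) (C D : subs G) (h a b : G) :
  lcoset h C a -> lcoset a D b -> lcoset h (set_mul C D) b.
Proof.
by move=> [c Cc ->] [d Dd ->]; exists (c * d); [exists c, d | rewrite mulgA].
Qed.

Lemma lcoset_sym (G : groupType) (D : subs G) (a b : G) :
  lcoset a D b -> lcoset b (set_inv D) a.
Proof.
by move=> [d Dd ->]; exists d^-1; [rewrite /set_inv invgK | rewrite mulgK].
Qed.

Lemma lcoset_sub (G : groupType) (C D : subs G) (h : G) :
  subset_of C D -> subset_of (lcoset h C) (lcoset h D).
Proof. by move=> CD x [c Cc ->]; exists c; first exact: CD. Qed.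

Lemma lcoset_self (G : groupType) (D : subs G) (x : G) : D 1 -> lcoset x D x.
Proof. by exists 1; rewrite ?mulg1. Qed.

Section GroupBornology.

Variables (G : groupType) (Bor : fam G).
Hypothesis hBor : is_group_bornology Bor.

Lemma bor_inv (C : subs G) : Bor C -> Bor (set_inv C).
Proof. by case: hBor => _ _ _ Binv _; apply: Binv. Qed.

Lemma bor_mul (C D : subs G) : Bor C -> Bor D -> Bor (set_mul C D).
Proof. by case: hBor => _ _ _ _ Bmul; apply: Bmul. Qed.

Lemma bor_unit : exists2 E, Bor E & E 1.
Proof. by case: hBor => Bcov _ _ _ _; have [E] := Bcov 1; exists E. Qed.

Lemma bor_pad (D : subs G) : Bor D -> exists2 E, Bor E & E 1 /\ subset_of D E.
Proof.
case: hBor => _ _ Bun _ _ BD; have [C1 BC1 C1_1] := bor_unit.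
by exists (fun x => D x \/ C1 x); [apply: Bun | split=> [|x]; [right | left]].
Qed.

Definition translates (D : subs G) : fam G := fun S => exists h, S = lcoset h D.

Lemma translates_ub (D : subs G) : Bor D -> D 1 -> group_ub Bor (translates D).
Proof.
move=> BD D1; split; last by exists D => // W [h ->]; exists (lcoset h D); [exists h|].
by move=> x; exists (lcoset x D); [exists x | exact: lcoset_self].
Qed.

Lemma bounded_in_translate (D B : subs G) (h : G) :
  Bor D -> subset_of B (lcoset h D) -> ls_bounded (group_ub Bor) B.
Proof.
move=> /bor_pad [E BE [E1 DE]] BhD; exists (translates E); split.
  exact: translates_ub.
by exists (lcoset h E); [exists h | move=> x /BhD; apply: lcoset_sub].
Qed.

Lemma refines_translates (F : fam G) (D : subs G) :
  Bor D -> (forall W, F W -> exists h, subset_of W (lcoset h D)) ->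
  exists2 V, group_ub Bor V & refines F V.
Proof.
move=> /bor_pad [E BE [E1 DE]] FD; exists (translates E); first exact: translates_ub.
move=> W /FD [h WhD]; exists (lcoset h E); first by exists h.
by move=> x /WhD; apply: lcoset_sub.
Qed.

Variable A : subs G.

Definition sub_ub : fam {x : G | A x} -> Prop :=
  fun V => is_cover V /\ exists2 C, Bor C &
    forall W, V W -> exists h, forall y, W y -> lcoset h C (proj1_sig y).

Definition sub_translates (D : subs G) : fam {x : G | A x} :=
  fun T => exists h, T = fun y => lcoset h D (proj1_sig y).

Lemma sub_translates_ub (D : subs G) : Bor D -> D 1 -> sub_ub (sub_translates D).
Proof.
move=> BD D1; split; last by exists D => // W [h ->]; exists h.
move=> y; exists (fun z => lcoset (proj1_sig y) D (proj1_sig z)).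
  by exists (proj1_sig y).
exact: lcoset_self.
Qed.

Lemma sub_bounded_in_translate (D : subs G) (B : subs {x : G | A x}) (h : G) :
  Bor D -> (forall y, B y -> lcoset h D (proj1_sig y)) -> ls_bounded sub_ub B.
Proof.
move=> /bor_pad [E BE [E1 DE]] BhD; exists (sub_translates E); split.
  exact: sub_translates_ub.
exists (fun y => lcoset h E (proj1_sig y)); first by exists h.
by move=> y /BhD; apply: lcoset_sub.
Qed.

Lemma sub_refines_translates (F : fam {x : G | A x}) (D : subs G) :
  Bor D -> (forall W, F W -> exists h, forall y, W y -> lcoset h D (proj1_sig y)) ->
  exists2 V, sub_ub V & refines F V.
Proof.
move=> /bor_pad [E BE [E1 DE]] FD; exists (sub_translates E).
  exact: sub_translates_ub.
move=> W /FD [h WhD]; exists (fun y => lcoset h E (proj1_sig y)); first by exists h.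
by move=> y /WhD; apply: lcoset_sub.
Qed.

(* Coarsening: a cover whose members with two points lie in members of a
   uniformly bounded cover is uniformly bounded (singletons lie in
   translates of a bounded set containing 1). *)
Lemma sub_ub_coarsen (U V : fam {x : G | A x}) :
  sub_ub U -> is_cover V ->
  (forall W, V W -> (exists x y, x <> y /\ W x /\ W y) ->
     exists2 W', U W' & subset_of W W') ->
  sub_ub V.
Proof.
move=> [_ [C BC UC]] Vcov VU; split=> //.
have [E BE [E1 CE]] := bor_pad BC; exists E => // W VW.
case: (classic (exists x y, x <> y /\ W x /\ W y)) => [two_pts|at_most_one].
  have [W' UW' WW'] := VU W VW two_pts; have [h W'hC] := UC W' UW'.
  by exists h => y /WW' /W'hC; apply: lcoset_sub.
case: (classic (exists y0, W y0)) => [[y0 Wy0]|empty]; last first.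
  by exists 1 => y Wy; case: empty; exists y.
exists (proj1_sig y0) => y Wy.
case: (classic (y = y0)) => [-> | ne]; first exact: lcoset_self.
by case: at_most_one; exists y, y0.
Qed.

(* Stars: if U and V lie in translates of C and D, then st(U, V) lies in
   translates of C D^-1 D. *)
Lemma sub_ub_star (U V : fam {x : G | A x}) :
  sub_ub U -> sub_ub V -> sub_ub (st_fam U V).
Proof.
move=> [Ucov [C BC UC]] [Vcov [D BD VD]]; split.
  move=> y; have [B UB By] := Ucov y; have [W VW Wy] := Vcov y.
  by exists (st_set B V); [exists B | exists W => //; split=> //; exists y].
exists (set_mul C (set_mul (set_inv D) D)).
  by apply/bor_mul/bor_mul/BD/bor_inv.
move=> _ [B UB ->]; have [h BhC] := UC B UB.
exists h => y [W VW [Wy [z [Wz Bz]]]]; have [h' WhD] := VD W VW.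
apply: lcoset_trans (BhC z Bz) _.
exact: lcoset_diff (WhD z Wz) (WhD y Wy).
Qed.

Lemma sub_ub_lss : is_lss sub_ub.
Proof.
split; [|by move=> U [] | exact: sub_ub_coarsen | exact: sub_ub_star].
by have [E BE E1] := bor_unit; exists (sub_translates E); apply: sub_translates_ub.
Qed.

Lemma inclusion_coarse : coarse sub_ub (group_ub Bor) (@proj1_sig G A).
Proof.
move=> B [U [[_ [C BC UC]] [W UW BW]]].
have [_ [h ->] WhC] := UC W UW.
by apply: (sub_bounded_in_translate (h := h) BC) => y /BW /WhC.
Qed.

Lemma inclusion_continuous : ls_continuous sub_ub (group_ub Bor) (@proj1_sig G A).
Proof.
move=> U [_ [C BC UC]]; apply: (refines_translates BC) => _ [W UW ->].
by have [h WhC] := UC W UW; exists h => _ [y Wy ->]; apply: WhC.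
Qed.

Variables (L : subs G) (f : G -> {x : G | A x}).
Hypotheses (BL : Bor L) (f_near : forall x, lcoset x L (proj1_sig (f x))).

Lemma retraction_coarse : coarse (group_ub Bor) sub_ub f.
Proof.
move=> B [V [[_ [C BC VC]] [W VW BW]]]; have [h WhC] := VC W VW.
apply: (bounded_in_translate (h := h) (bor_mul BC (bor_inv BL))).
move=> x /BW /WhC hCfx.
exact: lcoset_trans hCfx (lcoset_sym (f_near x)).
Qed.

Lemma retraction_continuous : ls_continuous (group_ub Bor) sub_ub f.
Proof.
move=> U [_ [C BC UC]].
apply: (sub_refines_translates (bor_mul BC BL)) => _ [T UT ->].
have [_ [h ->] ThC] := UC T UT.
by exists h => _ [x /ThC hCx ->]; apply: lcoset_trans hCx (f_near x).
Qed.

Lemma retraction_close : close (group_ub Bor) (fun x => proj1_sig (f x)) (fun x => x).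
Proof.
have [E BE [E1 LE]] := bor_pad BL; exists (translates E).
  exact: translates_ub.
move=> x; exists (lcoset x E); first by exists x.
by split; [apply: lcoset_sub (f_near x) | apply: lcoset_self].
Qed.

Lemma retraction_section_close : close sub_ub (fun y => f (proj1_sig y)) (fun y => y).
Proof.
have [E BE [E1 LE]] := bor_pad BL; exists (sub_translates E).
  exact: sub_translates_ub.
move=> y; exists (fun z => lcoset (proj1_sig y) E (proj1_sig z)).
  by exists (proj1_sig y).
by split; [apply: lcoset_sub (f_near _) | apply: lcoset_self].
Qed.

Lemma retraction_coarse_equivalence : coarse_equivalent (group_ub Bor) sub_ub.
Proof.
exists f, (@proj1_sig G A); split.
- by split; [apply: retraction_coarse | apply: retraction_continuous].
- by split; [apply: inclusion_coarse | apply: inclusion_continuous].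
- exact: retraction_close.
- exact: retraction_section_close.
Qed.

End GroupBornology.

Arguments sub_ub {G} Bor A.

Definition separated (G : groupType) (K A : subs G) :=
  forall s t g, A s -> A t -> lcoset g K s -> lcoset g K t -> s = t.

(* Zorn's lemma gives a maximal K-separated set A; by maximality every point
   shares a translate of K with some point of A (K is nonempty). *)
Lemma exists_separated_net (G : groupType) (K : subs G) (k0 : G) : K k0 ->
  exists A, separated K A /\
    forall x, exists2 s, A s & exists g, lcoset g K x /\ lcoset g K s.
Proof.
move=> Kk0.
have chain_sep (F : classical_sets.set (classical_sets.set G)) :
    classical_sets.subset F (separated K) ->
    classical_sets.total_on F classical_sets.subset ->
    separated K (classical_sets.bigcup F id).
  move=> Fsep Ftot s t g [X FX Xs] [Y FY Yt] gKs gKt.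
  have [XY|YX] := Ftot X Y FX FY; first exact: (Fsep Y FY s t g (XY s Xs)).
  exact: (Fsep X FX s t g Xs (YX t Yt)).
have [A [sepA maxA]] := classical_sets.Zorn_bigcup chain_sep.
exists A; split=> // x; case: (classic (A x)) => Ax.
  exists x => //; exists (x * k0^-1).
  by split; exists k0 => //; rewrite -mulgA mulVg mulg1.
apply: NNPP => no_pt.
have sepAx : separated K (fun y => A y \/ y = x).
  move=> s t g [As|->] [At|->] gKs gKt //; first exact: sepA gKs gKt.
    by case: no_pt; exists s => //; exists g.
  by case: no_pt; exists t => //; exists g.
apply: (maxA _ _ sepAx); split; first by move=> y Ay; left.
by move=> /(_ x (or_intror erefl)).
Qed.

Lemma net_retraction (G : groupType) (K A : subs G) :
  (forall x, exists2 s, A s & exists g, lcoset g K x /\ lcoset g K s) ->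
  exists f : G -> {x : G | A x},
    forall x, lcoset x (set_mul (set_inv K) K) (proj1_sig (f x)).
Proof.
move=> netA.
have near x : exists s : {y : G | A y},
    lcoset x (set_mul (set_inv K) K) (proj1_sig s).
  have [s As [g [gKx gKs]]] := netA x.
  by exists (exist _ s As); apply: lcoset_diff gKx gKs.
exists (fun x => proj1_sig (constructive_indefinite_description _ (near x))).
by move=> x; case: constructive_indefinite_description.
Qed.

(* Bounded geometry of a separated set: if every bounded set is covered by
   finitely many translates of K, then a trace of a translate hC on a
   K-separated set has at most as many points as translates of K needed to
   cover C, one per translate. *)
Lemma separated_bounded_geometry (G : groupType) (Bor : fam G) (K A : subs G) :
  separated K A ->
  (forall B, Bor B ->
     exists gs : list G, subset_of B (fun x => exists2 g, In g gs & lcoset g K x)) ->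
  forall U, sub_ub Bor A U -> exists N : nat, forall W, U W -> at_most N W.
Proof.
move=> sepA Kcov U [_ [C BC UC]].
have [gs Cgs] := Kcov C BC; exists (length gs) => W UW.
have [h WhC] := UC W UW.
apply: (at_most_cells (P := fun g y => lcoset (h * g) K (proj1_sig y))).
  move=> g y z _ _ hgKy hgKz; apply: eq_sig_hprop => [? ? ?|].
    exact: proof_irrelevance.
  exact: sepA (proj2_sig y) (proj2_sig z) hgKy hgKz.
move=> y /WhC [c /Cgs [g gs_g [k Kk ->]] ->].
by exists g => //; exists k; rewrite ?mulgA.
Qed.

(* Forward direction: given a coarse equivalence f : G -> Y into a space of
   bounded geometry, with coarse inverse g such that g o f is C-close to the
   identity, K := C^-1 C works: a bounded B is covered by the K-translates of
   the points of g(f(B)), and f(B) is finite by the uniform bound. *)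
Lemma bounded_geometry_translates_cover (G : groupType) (Bor : fam G) :
  is_group_bornology Bor -> has_bounded_geometry (group_ub Bor) ->
  exists2 K, Bor K & forall B, Bor B ->
    exists gs : list G, subset_of B (fun x => exists2 g, In g gs & lcoset g K x).
Proof.
move=> hBor [Y [ubY [_ [f [g [[_ f_cont] _ [U [_ [C BC UC]] gf_near] _]] Ybnd]]]].
have near_gf x : lcoset (g (f x)) (set_mul (set_inv C) C) x.
  have [W UW [Wgfx Wx]] := gf_near x; have [_ [h ->] WhC] := UC W UW.
  exact: lcoset_diff (WhC _ Wgfx) (WhC _ Wx).
exists (set_mul (set_inv C) C); first exact: (bor_mul hBor (bor_inv hBor BC) BC).
move=> B /(bor_pad hBor) [E BE [E1 BE']].
have [V Vub Vref] := f_cont _ (translates_ub BE E1).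
have fE_member : image_fam f (translates E) (Defs.image f (lcoset 1 E)).
  by exists (lcoset 1 E); first exists 1.
have [W VW fEW] := Vref _ fE_member.
have [N bnd] := Ybnd V Vub; have [l [_ Wl]] := bnd W VW.
exists (map g l) => x Bx; exists (g (f x)); last exact: near_gf.
apply: in_map; apply/Wl/fEW; exists x => //.
by exists x; [apply: BE' | rewrite mul1g].
Qed.

Theorem proposition8p3 (G : groupType) (Bor : fam G) :
  is_group_bornology Bor ->
  (has_bounded_geometry (group_ub Bor) <->
   exists2 K, Bor K &
     forall B, Bor B ->
       exists gs : list G, subset_of B (fun x => exists2 g, In g gs & lcoset g K x)).
Proof.
move=> hBor; split; first exact: bounded_geometry_translates_cover.
move=> [K BK Kcov].
have [E BE E1] := bor_unit hBor.
have [gs Egs] := Kcov E BE; have [_ _ [k0 Kk0 _]] := Egs 1 E1.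
have [A [sepA netA]] := exists_separated_net Kk0.
have [f f_near] := net_retraction netA.
exists {x : G | A x}, (sub_ub Bor A); split.
- exact: sub_ub_lss.
- exact: retraction_coarse_equivalence (bor_mul hBor (bor_inv hBor BK) BK) f_near.
- exact: separated_bounded_geometry sepA Kcov.
Qed.
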